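(* Let $p$ be a prime number and let $x,y,z\in\mathbb{N}$ with $x\le y\le z$ satisfy $\frac{4}{p}=\frac{1}{x}+\frac{1}{y}+\frac{1}{z}$. Let $d=\gcd(x,y,z)$, $a=\gcd(x,y)/d$, $b=\gcd(x,z)/d$, $c=\gcd(y,z)/d$, and let $x^{\circ},y^{\circ},z^{\circ}$ be the positive integers with $x=x^{\circ}abd$, $y=y^{\circ}acd$, $z=z^{\circ}bcd$. (i) If the solution is of Type I, i.e. $\gcd(x,p)=1$, $\gcd(y,p)=1$ and $\gcd(z,p)=p$, then $x^{\circ}=y^{\circ}=1$ and $z^{\circ}=p$. (ii) If the solution is of Type II, i.e. $\gcd(x,p)=1$, $\gcd(y,p)=p$ and $\gcd(z,p)=p$, then $x^{\circ}=y^{\circ}=z^{\circ}=1$.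
   Context: $\mathbb{N}$ denotes the positive integers. The quantities $x^{\circ},y^{\circ},z^{\circ}$ are well-defined positive integers since $abd\mid x$, $acd\mid y$, $bcd\mid z$ ($a,b,c$ are pairwise coprime). *)

From mathcomp Require Import all_boot.
Set Implicit Arguments. Unset Strict Implicit. Unset Printing Implicit Defensive.

(* 4/p = 1/x + 1/y + 1/z, cleared of denominators (all quantities positive). *)
Definition ES_eq (p x y z : nat) : Prop :=
  4 * (x * y * z) = p * (y * z + x * z + x * y).

Definition gcd3 (x y z : nat) : nat := gcdn (gcdn x y) z.
Definition ga (x y z : nat) : nat := gcdn x y %/ gcd3 x y z.
Definition gb (x y z : nat) : nat := gcdn x z %/ gcd3 x y z.
Definition gc (x y z : nat) : nat := gcdn y z %/ gcd3 x y z.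
Definition xo (x y z : nat) : nat := x %/ (ga x y z * gb x y z * gcd3 x y z).
Definition yo (x y z : nat) : nat := y %/ (ga x y z * gc x y z * gcd3 x y z).
Definition zo (x y z : nat) : nat := z %/ (gb x y z * gc x y z * gcd3 x y z).

From mathcomp Require Import all_boot ring.

(* Write u, v, w for x°, y°, z°, so x = u a b d, y = v a c d, z = w b c d.
   Since gcd(x, y) = a d, gcd(x, z) = b d and gcd(y, z) = c d, the pairs
   (b u, c v), (a u, c w) and (a v, b w) are coprime, and dividing the equation
   by a b c d^2 leaves 4 d a b c u v w = p (c v w + b u w + a u v).  Hence u
   divides p (c v w) while being coprime to c v w, so u | p; likewise v | p and
   w | p.  Divisors of x or y cannot be divisible by p in Type I, which forces
   u = v = 1 and, as p | z, w = p.  In Type II, u = 1 and p | c (otherwise p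
   would divide both v and w); v and w are not both p, and if exactly one of
   them is p, cancelling it in the equation shows that p divides a or b, a
   divisor of x. *)

Lemma coprime_of_gcdn_mul {m n k} : 0 < k -> gcdn (m * k) (n * k) = k -> coprime m n.
Proof.
by move=> k_gt0 gE; rewrite /coprime -(eqn_pmul2r k_gt0) muln_gcdl gE mul1n.
Qed.

Lemma dvdn_mul_common m n k x :
  coprime m n -> m * k %| x -> n * k %| x -> m * n * k %| x.
Proof.
move=> cmn mk nk; have <- : lcmn m n * k = m * n * k.
  by rewrite -(muln_lcm_gcd m n) (eqP cmn) muln1.
by rewrite muln_lcml dvdn_lcm mk nk.
Qed.

Lemma gcdn_gcdn_pair x y z : gcdn (gcdn x y) (gcdn x z) = gcd3 x y z.
Proof. by rewrite gcdnACA gcdnn gcdnA. Qed.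

Section GcdDecomposition.

Context (x y z : nat).
Hypotheses (x_gt0 : 0 < x) (y_gt0 : 0 < y).

Local Notation d := (gcd3 x y z).
Local Notation a := (ga x y z).
Local Notation b := (gb x y z).
Local Notation c := (gc x y z).

Lemma gcd3_mul_pairs :
  [/\ a * d = gcdn x y, b * d = gcdn x z & c * d = gcdn y z].
Proof.
have dxy : d %| gcdn x y by exact: dvdn_gcdl.
have dxz : d %| gcdn x z by rewrite /gcd3 gcdnAC dvdn_gcdl.
have dyz : d %| gcdn y z by rewrite /gcd3 -gcdnA dvdn_gcdr.
by rewrite /ga /gb /gc !divnK.
Qed.

Lemma gcd3_gt0 : 0 < d.
Proof. by rewrite !gcdn_gt0 x_gt0. Qed.

Lemma ga_gb_gc_gcd3_gt0 : 0 < a * b * c * d.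
Proof.
have [aE bE cE] := gcd3_mul_pairs.
have : 0 < a * d * (b * d) * (c * d).
  by rewrite aE bE cE !muln_gt0 !gcdn_gt0 x_gt0 y_gt0.
by rewrite !muln_gt0 => /andP [/andP [/andP [-> _] /andP [-> _]] /andP [-> ->]].
Qed.

Lemma coprime_ga_gb_gc : [/\ coprime a b, coprime a c & coprime b c].
Proof.
have [aE bE cE] := gcd3_mul_pairs.
split; apply: (coprime_of_gcdn_mul gcd3_gt0); rewrite ?aE ?bE ?cE.
- exact: gcdn_gcdn_pair.
- by rewrite gcdnC (gcdnC x) gcdn_gcdn_pair /gcd3 gcdnC gcdnA.
- by rewrite (gcdnC x) (gcdnC y) gcdn_gcdn_pair /gcd3 -gcdnA gcdnC.
Qed.

Lemma xo_yo_zoE :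
  [/\ xo x y z * (a * b * d) = x, yo x y z * (a * c * d) = y
    & zo x y z * (b * c * d) = z].
Proof.
have [aE bE cE] := gcd3_mul_pairs; have [cab cac cbc] := coprime_ga_gb_gc.
rewrite /xo /yo /zo !divnK //; apply: dvdn_mul_common => //;
  by rewrite ?aE ?bE ?cE ?dvdn_gcdl ?dvdn_gcdr.
Qed.

Lemma coprime_xo_yo_zo :
  [/\ coprime (b * xo x y z) (c * yo x y z), coprime (a * xo x y z) (c * zo x y z)
    & coprime (a * yo x y z) (b * zo x y z)].
Proof.
have [aE bE cE] := gcd3_mul_pairs; have [xE yE zE] := xo_yo_zoE.
have ad_gt0 : 0 < a * d by rewrite aE gcdn_gt0 x_gt0.
have bd_gt0 : 0 < b * d by rewrite bE gcdn_gt0 x_gt0.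
have cd_gt0 : 0 < c * d by rewrite cE gcdn_gt0 y_gt0.
split.
- apply: (coprime_of_gcdn_mul ad_gt0).
  have -> : b * xo x y z * (a * d) = x by rewrite -[RHS]xE; ring.
  have -> : c * yo x y z * (a * d) = y by rewrite -[RHS]yE; ring.
  by rewrite aE.
- apply: (coprime_of_gcdn_mul bd_gt0).
  have -> : a * xo x y z * (b * d) = x by rewrite -[RHS]xE; ring.
  have -> : c * zo x y z * (b * d) = z by rewrite -[RHS]zE; ring.
  by rewrite bE.
- apply: (coprime_of_gcdn_mul cd_gt0).
  have -> : a * yo x y z * (c * d) = y by rewrite -[RHS]yE; ring.
  have -> : b * zo x y z * (c * d) = z by rewrite -[RHS]zE; ring.
  by rewrite cE.
Qed.

End GcdDecomposition.

Lemma ES_eq_reduced {p a b c d u v w x y z} : 0 < a * b * c * d ->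
  u * (a * b * d) = x -> v * (a * c * d) = y -> w * (b * c * d) = z ->
  ES_eq p x y z ->
  4 * d * a * b * c * (u * v * w) = p * (c * v * w + b * u * w + a * u * v).
Proof.
rewrite /ES_eq => abcd_gt0 <- <- <- E.
have /andP [_ d_gt0] : (0 < a * b * c) && (0 < d) by rewrite -muln_gt0.
have k_gt0 : 0 < a * b * c * d * d by rewrite muln_gt0 abcd_gt0.
apply/eqP; rewrite -(eqn_pmul2l k_gt0); apply/eqP.
transitivity (4 * (u * (a * b * d) * (v * (a * c * d)) * (w * (b * c * d)))).
  by ring.
by rewrite E; ring.
Qed.

Lemma dvdn_of_mul_eq p u t s k : u * k = p * t + u * s -> coprime u t -> u %| p.
Proof.
move=> E cut; rewrite -(Gauss_dvdl p cut) -(dvdn_addl _ (dvdn_mulr s (dvdnn u))) -E.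
exact: dvdn_mulr.
Qed.

Lemma coprime_dvdn_eq1 {t n p} : t %| n -> coprime n p -> t %| p -> t = 1.
Proof. by move=> tn cnp tp; apply/eqP; rewrite -dvdn1 -(eqP cnp) dvdn_gcd tn tp. Qed.

Lemma prime_ndvd_of_coprime {p t n} : prime p -> t %| n -> coprime n p -> ~~ (p %| t).
Proof. by move=> p_pr tn cnp; rewrite -prime_coprime // coprime_sym (coprime_dvdl tn). Qed.

Section ReducedSolution.

Context {p a b c d u v w : nat}.
Hypothesis p_prime : prime p.
Hypothesis reduced :
  4 * d * a * b * c * (u * v * w) = p * (c * v * w + b * u * w + a * u * v).
Hypotheses (cop_uv : coprime (b * u) (c * v)) (cop_uw : coprime (a * u) (c * w))
  (cop_vw : coprime (a * v) (b * w)).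

Lemma u_dvd_p : u %| p.
Proof.
apply: (@dvdn_of_mul_eq _ _ (c * v * w) (p * (b * w + a * v)) (4 * d * a * b * c * (v * w))).
  by transitivity (4 * d * a * b * c * (u * v * w)); [ring | rewrite reduced; ring].
move: cop_uv cop_uw; rewrite !coprimeMl !coprimeMr.
by case/andP=> _ /andP [-> ->] /andP [_ /andP [_ ->]].
Qed.

Lemma v_dvd_p : v %| p.
Proof.
apply: (@dvdn_of_mul_eq _ _ (b * u * w) (p * (c * w + a * u)) (4 * d * a * b * c * (u * w))).
  by transitivity (4 * d * a * b * c * (u * v * w)); [ring | rewrite reduced; ring].
rewrite !coprimeMr (coprime_sym v u).
move: cop_uv cop_vw; rewrite !coprimeMl !coprimeMr.
by case/andP=> _ /andP [_ ->] /andP [_ /andP [-> ->]].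
Qed.

Lemma w_dvd_p : w %| p.
Proof.
apply: (@dvdn_of_mul_eq _ _ (a * u * v) (p * (c * v + b * u)) (4 * d * a * b * c * (u * v))).
  by transitivity (4 * d * a * b * c * (u * v * w)); [ring | rewrite reduced; ring].
rewrite !coprimeMr ![coprime w _]coprime_sym.
move: cop_uw cop_vw; rewrite !coprimeMl !coprimeMr.
by case/andP=> /andP [_ ->] /andP [_ ->] /andP [_ /andP [_ ->]].
Qed.

Lemma prime_ndvd_abd : coprime (u * (a * b * d)) p ->
  [/\ ~~ (p %| a), ~~ (p %| b) & ~~ (p %| d)].
Proof.
move=> cxp; split; apply: (prime_ndvd_of_coprime p_prime _ cxp); apply/dvdnP.
- by exists (u * b * d); ring.
- by exists (u * a * d); ring.
- by exists (u * a * b); ring.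
Qed.

Lemma typeI_reduced :
  coprime (u * (a * b * d)) p -> coprime (v * (a * c * d)) p -> p %| w * (b * c * d) ->
  [/\ u = 1, v = 1 & w = p].
Proof.
move=> cxp cyp pz; have [_ nb nd] := prime_ndvd_abd cxp.
have nc : ~~ (p %| c).
  by apply: (prime_ndvd_of_coprime p_prime _ cyp); apply/dvdnP; exists (v * a * d); ring.
split.
- exact: coprime_dvdn_eq1 (dvdn_mulr _ (dvdnn u)) cxp u_dvd_p.
- exact: coprime_dvdn_eq1 (dvdn_mulr _ (dvdnn v)) cyp v_dvd_p.
- move: pz; rewrite !Euclid_dvdM // (negbTE nb) (negbTE nc) (negbTE nd) !orbF => pw.
  by apply/eqP; rewrite eqn_dvd w_dvd_p pw.
Qed.

Lemma coprime_v_w : coprime v w.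
Proof. by move: cop_vw; rewrite coprimeMl !coprimeMr => /andP [_ /andP [_ ->]]. Qed.

Lemma typeII_p_dvd_c :
  coprime (u * (a * b * d)) p -> p %| v * (a * c * d) -> p %| w * (b * c * d) -> p %| c.
Proof.
move=> cxp py pz; have [na nb nd] := prime_ndvd_abd cxp.
apply: contraT => nc.
move: py pz; rewrite !Euclid_dvdM // (negbTE na) (negbTE nb) (negbTE nc) (negbTE nd) !orbF.
move=> pv pw; move: (coprime_dvdl pv coprime_v_w).
by rewrite prime_coprime // pw.
Qed.

Lemma typeII_reduced :
  coprime (u * (a * b * d)) p -> p %| v * (a * c * d) -> p %| w * (b * c * d) ->
  [/\ u = 1, v = 1 & w = 1].
Proof.
move=> cxp py pz; have [na nb _] := prime_ndvd_abd cxp.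
have pc := typeII_p_dvd_c cxp py pz.
have u1 : u = 1 := coprime_dvdn_eq1 (dvdn_mulr _ (dvdnn u)) cxp u_dvd_p.
have p_dvdn_cofactor n : 4 * d * a * b * c * p = p * n -> p %| n.
  rewrite mulnC => /eqP; rewrite eqn_pmul2l ?prime_gt0 // => /eqP <-.
  exact: dvdn_mull.
have /primeP [_ dvd_p] := p_prime.
have /orP [/eqP v1 | /eqP vp] := dvd_p v v_dvd_p;
  have /orP [/eqP w1 | /eqP wp] := dvd_p w w_dvd_p.
- by split.
- have : p %| p * (c + b) + a.
    apply: p_dvdn_cofactor; transitivity (4 * d * a * b * c * (u * v * w)).
      by rewrite u1 v1 wp; ring.
    by rewrite reduced u1 v1 wp; ring.
  by rewrite dvdn_addr ?dvdn_mulr // (negbTE na).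
- have : p %| p * (c + a) + b.
    apply: p_dvdn_cofactor; transitivity (4 * d * a * b * c * (u * v * w)).
      by rewrite u1 vp w1; ring.
    by rewrite reduced u1 vp w1; ring.
  by rewrite dvdn_addr ?dvdn_mulr // (negbTE nb).
- by move: coprime_v_w; rewrite vp wp prime_coprime // dvdnn.
Qed.

End ReducedSolution.

Theorem lemma5 (p x y z : nat) :
  prime p -> 0 < x -> x <= y -> y <= z -> ES_eq p x y z ->
  ((gcdn x p = 1 /\ gcdn y p = 1 /\ gcdn z p = p) ->
     xo x y z = 1 /\ yo x y z = 1 /\ zo x y z = p) /\
  ((gcdn x p = 1 /\ gcdn y p = p /\ gcdn z p = p) ->
     xo x y z = 1 /\ yo x y z = 1 /\ zo x y z = 1).
Proof.
move=> p_prime x_gt0 le_xy _ E.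
have y_gt0 : 0 < y := leq_trans x_gt0 le_xy.
have [xE yE zE] := xo_yo_zoE x y z x_gt0.
have [cop_uv cop_uw cop_vw] := coprime_xo_yo_zo x y z x_gt0 y_gt0.
have reduced := ES_eq_reduced (ga_gb_gc_gcd3_gt0 x y z x_gt0 y_gt0) xE yE zE E.
split=> [[/eqP cxp [/eqP cyp /gcdn_idPr pz]] | [/eqP cxp [/gcdn_idPr py /gcdn_idPr pz]]].
- rewrite -xE in cxp; rewrite -yE in cyp; rewrite -zE in pz.
  by have [-> -> ->] := typeI_reduced p_prime reduced cop_uv cop_uw cop_vw cxp cyp pz.
- rewrite -xE in cxp; rewrite -yE in py; rewrite -zE in pz.
  by have [-> -> ->] := typeII_reduced p_prime reduced cop_uv cop_uw cop_vw cxp py pz.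
Qed.
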